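(* Let $d$ be a square-free positive integer and $N=U^{\oplus2}\oplus E_8^{\oplus2}\oplus\langle-2\rangle\oplus\langle-2d\rangle$, and let $I_2(N)$ be the set of primitive isotropic rank-two sublattices of $N$. The natural map $I_2(N)/O^+(N)\to I_2(N)/O(N)$ is a bijection.
   Context: $O^+(N)$ is the index-two subgroup of $O(N)$ of isometries of real spinor norm $1$ (the real spinor norm of a product of reflections $\rho_{v_1}\cdots\rho_{v_m}$, $v_i\in N_{\mathbb R}$, is $\prod(-v_i^2/2)$ modulo squares). *)

From HB Require Import structures.
From mathcomp Require Import all_boot all_order all_algebra.
From mathcomp Require Import reals.
Set Implicit Arguments. Unset Strict Implicit. Unset Printing Implicit Defensive.
Import Order.TTheory GRing.Theory Num.Theory.
Local Open Scope ring_scope.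

Definition squarefree (d : nat) : Prop :=
  forall p : nat, prime p -> ~~ (p * p %| d)%N.

(* Gram matrix of E_8 (negative definite, i.e. E_8(-1)), indices 0..7:
   Dynkin chain 0-1-2-3-4-5-6 and node 7 attached to node 4. *)
Definition e8_adj (i j : nat) : bool :=
  [|| ((i.+1 == j) || (j.+1 == i)) && (i < 7)%N && (j < 7)%N,
      (i == 4%N) && (j == 7%N) | (i == 7%N) && (j == 4%N)].

Definition e8_entry (i j : nat) : int :=
  if i == j then (-2)%R else if e8_adj i j then 1%R else 0%R.

(* Gram matrix entries of N = U^2 + E_8^2 + <-2> + <-2d>, rank 22,
   in the basis: 0..3 (U+U), 4..11 (E_8), 12..19 (E_8), 20 (<-2>), 21 (<-2d>). *)
Definition gramN_entry (d : nat) (i j : nat) : int :=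
  if (i < 4)%N && (j < 4)%N then
    (if (i./2 == j./2) && (i != j) then 1%R else 0%R)
  else if [&& (4 <= i)%N, (i < 12)%N, (4 <= j)%N & (j < 12)%N] then
    e8_entry (i - 4) (j - 4)
  else if [&& (12 <= i)%N, (i < 20)%N, (12 <= j)%N & (j < 20)%N] then
    e8_entry (i - 12) (j - 12)
  else if (i == 20%N) && (j == 20%N) then (-2)%R
  else if (i == 21%N) && (j == 21%N) then (- (2 * d)%:Z)%R
  else 0%R.

Definition gramN (d : nat) : 'M[int]_22 :=
  \matrix_(i < 22, j < 22) gramN_entry d i j.

Definition vecN := 'cV[int]_22.

Definition bN (d : nat) (x y : vecN) : int := ((x^T *m gramN d *m y) 0 0).

Definition isom_N (d : nat) (g : 'M[int]_22) : Prop :=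
  g \in unitmx /\ g^T *m gramN d *m g = gramN d.

Definition gramR (R : realType) (d : nat) : 'M[R]_22 := map_mx intr (gramN d).
Definition qR (R : realType) (d : nat) (v : 'cV[R]_22) : R :=
  (v^T *m gramR R d *m v) 0 0.

(* reflection rho_v (x) = x - 2 (x,v)/(v,v) v, as a matrix acting on columns *)
Definition reflR (R : realType) (d : nat) (v : 'cV[R]_22) : 'M[R]_22 :=
  1%:M - (2 / qR d v) *: (v *m (v^T *m gramR R d)).

(* real spinor norm 1: g is a product of reflections rho_{v_1} ... rho_{v_m}
   (v_i anisotropic in N_R) with prod (- v_i^2 / 2) a positive real, i.e. a
   square in R^*.  (Spinor norm is well defined, so existence of one such
   decomposition is equivalent to spinor norm 1.) *)
Definition spinor_norm_one (R : realType) (d : nat) (g : 'M[R]_22) : Prop :=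
  exists s : seq 'cV[R]_22,
    [/\ all (fun v => qR d v != 0) s,
        g = \prod_(v <- s) reflR d v
      & 0 < \prod_(v <- s) (- qR d v / 2)].

Definition isom_plus_N (R : realType) (d : nat) (g : 'M[int]_22) : Prop :=
  isom_N d g /\ spinor_norm_one d (map_mx intr g : 'M[R]_22).

(* sublattices are represented by their sets of vectors *)
Definition span2 (u v : vecN) : vecN -> Prop :=
  fun x => exists a b : int, x = a *: u + b *: v.

Definition prim_iso_rank2 (d : nat) (L : vecN -> Prop) : Prop :=
  [/\ (exists u v : vecN,
         (forall a b : int, a *: u + b *: v = 0 -> a = 0 /\ b = 0) /\
         (forall x, L x <-> span2 u v x)),
      (forall (k : int) (x : vecN), k != 0 -> L (k *: x) -> L x)
    & (forall x y, L x -> L y -> bN d x y = 0)].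

Definition maps_to (g : 'M[int]_22) (L L' : vecN -> Prop) : Prop :=
  forall y, L' y <-> exists x, L x /\ y = g *m x.

From HB Require Import structures.
From mathcomp Require Import all_boot all_order all_algebra.
From mathcomp Require Import reals.
From mathcomp Require Import ring.
Set Implicit Arguments. Unset Strict Implicit. Unset Printing Implicit Defensive.
Import Order.TTheory GRing.Theory Num.Theory.
Local Open Scope ring_scope.

(* Over R every isometry of N is a product of reflections in anisotropic
   vectors (Cartan-Dieudonne, run along an explicit orthogonal basis of N (x) Q).
   If the spinor product of such a decomposition of g is negative, we compose g
   with an h in O(N) stabilising L' whose spinor norm is -1.  To build h, note
   that L' contains u with (u, w) = 1 for some w in N: otherwise a prime p
   divides (u_1, N) and (u_2, N) for a basis u_1, u_2 of L', hence, by
   unimodularity of U^2 + E_8^2, their first twenty coordinates; isotropy then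
   forces p to divide the minor of their last two coordinates, so some
   combination of u_1, u_2 that is nonzero mod p is divisible by p, against
   primitivity.  Making w isotropic, h = rho_(u + w) rho_(u - w) has spinor
   norm (-1) * 1 and acts on L' as the involution z |-> z - 2 (w, z) u. *)

Section BilinearForm.
Variables (F : comNzRingType) (n : nat) (G : 'M[F]_n).

Definition bil (x y : 'cV[F]_n) : F := (x^T *m G *m y) 0 0.

Lemma bil_mx x y : x^T *m G *m y = (bil x y)%:M.
Proof. exact: mx11_scalar. Qed.

Lemma bilDl x1 x2 y : bil (x1 + x2) y = bil x1 y + bil x2 y.
Proof. by rewrite /bil raddfD /= !mulmxDl mxE. Qed.

Lemma bilZl a x y : bil (a *: x) y = a * bil x y.
Proof. by rewrite /bil linearZ /= -!scalemxAl mxE. Qed.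

Lemma bilNl x y : bil (- x) y = - bil x y.
Proof. by rewrite -scaleN1r bilZl mulN1r. Qed.

Lemma bilBl x1 x2 y : bil (x1 - x2) y = bil x1 y - bil x2 y.
Proof. by rewrite bilDl bilNl. Qed.

Lemma bilDr x y1 y2 : bil x (y1 + y2) = bil x y1 + bil x y2.
Proof. by rewrite /bil mulmxDr mxE. Qed.

Lemma bilZr a x y : bil x (a *: y) = a * bil x y.
Proof. by rewrite /bil -scalemxAr mxE. Qed.

Lemma bilNr x y : bil x (- y) = - bil x y.
Proof. by rewrite -scaleN1r bilZr mulN1r. Qed.

Lemma bilBr x y1 y2 : bil x (y1 - y2) = bil x y1 - bil x y2.
Proof. by rewrite bilDr bilNr. Qed.

Lemma gram_entry m p (A : 'M[F]_(n, m)) (B : 'M[F]_(n, p)) i j :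
  (A^T *m G *m B) i j = bil (col i A) (col j B).
Proof.
have -> : (A^T *m G *m B) i j = (col j (row i (A^T *m G *m B))) 0 0 by rewrite !mxE.
by rewrite !row_mul colE -!mulmxA -colE -tr_col !mulmxA.
Qed.

Definition iso (g : 'M[F]_n) := g^T *m G *m g = G.

Lemma iso_mul g1 g2 : iso g1 -> iso g2 -> iso (g1 *m g2).
Proof.
rewrite /iso => h1 h2.
by rewrite trmx_mul -!mulmxA (mulmxA g1^T) (mulmxA (g1^T *m G)) h1 mulmxA.
Qed.

Lemma iso_bil g x y : iso g -> bil (g *m x) (g *m y) = bil x y.
Proof.
rewrite /iso /bil trmx_mul => h.
by rewrite -!mulmxA (mulmxA g^T) (mulmxA (g^T *m G)) h !mulmxA.
Qed.

Definition dyad (v : 'cV[F]_n) : 'M[F]_n := v *m (v^T *m G).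

Lemma dyadE v z : dyad v *m z = bil v z *: v.
Proof. by rewrite /dyad -mulmxA bil_mx mul_mx_scalar. Qed.

Lemma dyad_sqr v : dyad v *m dyad v = bil v v *: dyad v.
Proof.
have -> : dyad v *m dyad v = dyad v *m v *m (v^T *m G) by rewrite -mulmxA.
by rewrite dyadE -scalemxAl.
Qed.

Definition pseudorefl (e : F) (v : 'cV[F]_n) : 'M[F]_n := 1%:M - e *: dyad v.

Lemma pseudoreflE e v z : pseudorefl e v *m z = z - (e * bil v z) *: v.
Proof. by rewrite mulmxBl mul1mx -scalemxAl dyadE scalerA. Qed.

Lemma pseudorefl_fix e v z : bil v z = 0 -> pseudorefl e v *m z = z.
Proof. by move=> vz; rewrite pseudoreflE vz mulr0 scale0r subr0. Qed.

Lemma pseudorefl_invol e v : e * bil v v = 2 ->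
  pseudorefl e v *m pseudorefl e v = 1%:M.
Proof.
move=> ev; rewrite mulmxBl mulmxBr !mul1mx mulmxBr mulmx1.
rewrite -scalemxAl -scalemxAr dyad_sqr !scalerA.
set P := dyad v; clearbody P; apply/matrixP => i j; rewrite !mxE.
transitivity ((i == j)%:R + P i j * e * (e * bil v v - 2) : F); first ring.
by rewrite ev subrr mulr0 addr0.
Qed.

Hypothesis G_sym : G^T = G.

Lemma bilC x y : bil x y = bil y x.
Proof.
rewrite /bil; have -> : (x^T *m G *m y) 0 0 = ((x^T *m G *m y)^T) 0 0 by rewrite [in RHS]mxE.
by rewrite !trmx_mul trmxK G_sym mulmxA.
Qed.

Lemma dyad_adj v : (dyad v)^T *m G = G *m dyad v.
Proof. by rewrite /dyad !trmx_mul trmxK G_sym !mulmxA. Qed.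

Lemma pseudorefl_iso e v : e * bil v v = 2 -> iso (pseudorefl e v).
Proof.
move=> ev; rewrite /iso; have -> : (pseudorefl e v)^T = 1%:M - e *: (dyad v)^T.
  by rewrite linearB /= linearZ /= trmx1.
rewrite mulmxBl mul1mx -scalemxAl dyad_adj mulmxBl mulmxBr mulmx1.
rewrite -!scalemxAl -!scalemxAr mulmxBr mulmx1 -scalemxAr -mulmxA dyad_sqr -scalemxAr.
set GP := G *m dyad v; clearbody GP; apply/matrixP => i j; rewrite !mxE.
transitivity (G i j + GP i j * e * (e * bil v v - 2)); first ring.
by rewrite ev subrr mulr0 addr0.
Qed.

Lemma pseudorefl_hyperbolic u w z : bil u u = 0 -> bil w w = 0 -> bil u w = 1 ->
  bil u z = 0 ->
  pseudorefl 1 (u + w) *m (pseudorefl (-1) (u - w) *m z) = z - (2 * bil w z) *: u.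
Proof.
move=> uu ww uw uz; have wu : bil w u = 1 by rewrite bilC.
rewrite !pseudoreflE !(bilDl, bilBl, bilDr, bilBr, bilZr, bilNr, bilNl) uu ww uw wu uz.
set c := bil w z; apply/colP => i; rewrite !mxE; ring.
Qed.

End BilinearForm.

Section Reflections.
Variables (F : fieldType) (n : nat) (G : 'M[F]_n).
Hypotheses (G_sym : G^T = G) (two_neq0 : 2 != 0 :> F).
Local Notation bil := (bil G).
Local Notation iso := (iso G).

Definition refl (v : 'cV[F]_n) : 'M[F]_n := pseudorefl G (2 / bil v v) v.

Lemma refl_scale v : bil v v != 0 -> 2 / bil v v * bil v v = 2.
Proof. by move=> vv; rewrite mulfVK. Qed.

Lemma refl_invol v : bil v v != 0 -> refl v *m refl v = 1%:M.
Proof. by move/refl_scale/pseudorefl_invol. Qed.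

Lemma refl_iso v : bil v v != 0 -> iso (refl v).
Proof. by move/refl_scale/(pseudorefl_iso G_sym). Qed.

Lemma refl_swap a b : bil a a = bil b b -> bil (a - b) (a - b) != 0 ->
  refl (a - b) *m a = b.
Proof.
move=> ab ab_aniso; rewrite /refl pseudoreflE.
have -> : 2 / bil (a - b) (a - b) * bil (a - b) a = 1.
  move: ab_aniso; rewrite !(bilBl, bilBr) (bilC G_sym b a) ab => ab_aniso.
  by field.
by rewrite scale1r opprB addrC subrK.
Qed.

Lemma refl_opp v : bil v v != 0 -> refl v *m - v = v.
Proof.
move=> vv; rewrite pseudoreflE bilNr mulrN refl_scale // scaleNr opprK.
by rewrite scaler_nat mulr2n addrC addrK.
Qed.

Definition prod_refl (s : seq 'cV[F]_n) : 'M[F]_n := \prod_(v <- s) refl v.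

Lemma prod_refl_rev s : all (fun v => bil v v != 0) s ->
  prod_refl (rev s) *m prod_refl s = 1%:M.
Proof.
elim: s => [|v s IH] /=; first by rewrite /prod_refl !big_nil mulmx1.
case/andP=> vv s_aniso.
rewrite /prod_refl rev_cons big_rcons big_cons /= -/(prod_refl _) -/(prod_refl s).
by rewrite -mulmxA (mulmxA (refl v)) refl_invol // mul1mx IH.
Qed.

Lemma prod_refl_iso s : all (fun v => bil v v != 0) s -> iso (prod_refl s).
Proof.
elim: s => [|v s IH] /=; first by rewrite /prod_refl big_nil /iso trmx1 mul1mx mulmx1.
by case/andP=> vv /IH s_iso; rewrite /prod_refl big_cons; apply: iso_mul => //; apply: refl_iso.
Qed.

(* If a - b is isotropic then a + b is not, since q(a + b) + q(a - b) = 4 q(a). *)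
Lemma exists_prod_refl_map a b : bil a a = bil b b -> bil b b != 0 ->
  exists s, [/\ all (fun v => bil v v != 0) s, prod_refl s *m a = b
    & forall z, bil a z = 0 -> bil b z = 0 -> prod_refl s *m z = z].
Proof.
move=> ab b_aniso.
have [ab_iso|ab_aniso] := eqVneq (bil (a - b) (a - b)) 0; last first.
  exists [:: a - b]; rewrite /prod_refl big_seq1 /= ab_aniso; split=> //.
    exact: refl_swap.
  by move=> z az bz; apply: pseudorefl_fix; rewrite bilBl az bz subrr.
have apb_aniso : bil (a + b) (a + b) != 0.
  have -> : bil (a + b) (a + b) = bil a a *+ 4 - bil (a - b) (a - b).
    rewrite !bilBl !bilBr !bilDl !bilDr (bilC G_sym b a) -ab; ring.
  by rewrite ab_iso subr0 -mulr_natr mulf_neq0 ?ab // (natrM F 2 2) mulf_neq0.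
exists [:: b; a + b].
have -> : prod_refl [:: b; a + b] = refl b *m refl (a + b).
  by rewrite /prod_refl big_cons big_seq1.
split; first by rewrite /= apb_aniso b_aniso.
  have := @refl_swap a (- b); rewrite opprK bilNl bilNr opprK => /(_ ab apb_aniso) r_ab.
  by rewrite -mulmxA r_ab refl_opp.
move=> z az bz; rewrite -mulmxA !pseudorefl_fix // ?bilDl ?az ?bz ?addr0 //.
Qed.

Section OrthogonalBasis.
Variable e : 'I_n -> 'cV[F]_n.
Hypotheses (e_orth : forall i j, i != j -> bil (e i) (e j) = 0)
  (e_aniso : forall i, bil (e i) (e i) != 0).

Lemma fixed_basis_id g : (forall i, g *m e i = e i) -> g = 1%:M.
Proof.
move=> g_fix; pose B := \matrix_(i, j) e j i 0.
have colB j : col j B = e j by apply/matrixP=> i k; rewrite !mxE (ord1 k).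
have gB : g *m B = B.
  apply/trmx_inj/row_matrixP => j.
  by rewrite -!tr_col !colEsub -mulmx_colsub -!colEsub colB g_fix.
have gramB : B^T *m G *m B = diag_mx (\row_i bil (e i) (e i)).
  apply/matrixP=> i j; rewrite gram_entry !colB !mxE.
  by case: eqVneq => [->|/e_orth]; rewrite ?mulr1n ?mulr0n.
have B_unit : B \in unitmx.
  have : \det (B^T *m G *m B) != 0.
    by rewrite gramB det_diag; apply/prodf_neq0 => i _; rewrite mxE.
  by rewrite unitmxE unitfE !det_mulmx mulf_eq0 negb_or => /andP[].
by rewrite -[g](mulmxK B_unit) gB mulmxV.
Qed.

Lemma iso_prod_refl_fixing k : (k <= n)%N -> forall g, iso g ->
  (forall j : 'I_n, (k <= j)%N -> g *m e j = e j) ->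
  exists s, all (fun v => bil v v != 0) s /\ g = prod_refl s.
Proof.
elim: k => [_ g _ g_fix|k IH lt_kn g g_iso g_fix].
  by exists [::]; rewrite /prod_refl big_nil (fixed_basis_id (fun j => g_fix j (leq0n _))).
set ek := Ordinal lt_kn.
have gek : bil (g *m e ek) (g *m e ek) = bil (e ek) (e ek) by exact: iso_bil.
have [s [s_aniso s_map s_fix]] := exists_prod_refl_map gek (e_aniso ek).
have sg_iso := iso_mul (prod_refl_iso s_aniso) g_iso.
have [|t [t_aniso sg_t]] := IH (ltnW lt_kn) _ sg_iso.
  move=> j; rewrite leq_eqVlt => /orP[/eqP ej|lt_kj].
    have -> : j = ek by apply: val_inj; rewrite /= ej.
    by rewrite -mulmxA s_map.
  have ek_j : ek != j by rewrite -val_eqE /= neq_ltn lt_kj.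
  rewrite -mulmxA g_fix 1?s_fix ?e_orth //.
  by rewrite -(g_fix j lt_kj) iso_bil // e_orth.
exists (rev s ++ t); split; first by rewrite all_cat all_rev s_aniso.
have -> : prod_refl (rev s ++ t) = prod_refl (rev s) *m prod_refl t.
  by rewrite /prod_refl big_cat.
by rewrite -sg_t mulmxA prod_refl_rev // mul1mx.
Qed.

Theorem cartan_dieudonne g : iso g ->
  exists s, all (fun v => bil v v != 0) s /\ g = prod_refl s.
Proof.
by move=> g_iso; apply: (iso_prod_refl_fixing (leqnn n)) => // j; rewrite leqNgt ltn_ord.
Qed.

End OrthogonalBasis.
End Reflections.

(* The form of N on coordinate functions, block by block; [qformN] is half the
   norm, integral since N is even. *)
Definition bformU (a b : nat -> int) : int := a 0 * b 1 + a 1 * b 0.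

Definition bformE8 (a b : nat -> int) : int :=
  - 2 * (a 0 * b 0 + a 1 * b 1 + a 2 * b 2 + a 3 * b 3
         + a 4 * b 4 + a 5 * b 5 + a 6 * b 6 + a 7 * b 7)
  + (a 0 * b 1 + a 1 * b 0) + (a 1 * b 2 + a 2 * b 1) + (a 2 * b 3 + a 3 * b 2)
  + (a 3 * b 4 + a 4 * b 3) + (a 4 * b 5 + a 5 * b 4) + (a 5 * b 6 + a 6 * b 5)
  + (a 4 * b 7 + a 7 * b 4).

Definition bformV (a b : nat -> int) : int :=
  bformU a b + bformU (a \o addn 2) (b \o addn 2)
  + bformE8 (a \o addn 4) (b \o addn 4) + bformE8 (a \o addn 12) (b \o addn 12).

Definition bformN (d : nat) (a b : nat -> int) : int :=
  bformV a b - 2 * a 20 * b 20 - (2 * d)%:Z * a 21 * b 21.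

Definition qformE8 (a : nat -> int) : int :=
  - (a 0 ^+ 2 + a 1 ^+ 2 + a 2 ^+ 2 + a 3 ^+ 2 + a 4 ^+ 2 + a 5 ^+ 2 + a 6 ^+ 2 + a 7 ^+ 2)
  + a 0 * a 1 + a 1 * a 2 + a 2 * a 3 + a 3 * a 4 + a 4 * a 5 + a 5 * a 6 + a 4 * a 7.

Definition qformV (a : nat -> int) : int :=
  a 0 * a 1 + a 2 * a 3 + qformE8 (a \o addn 4) + qformE8 (a \o addn 12).

Definition qformN (d : nat) (a : nat -> int) : int :=
  qformV a - a 20 ^+ 2 - d%:Z * a 21 ^+ 2.

Definition coordN (x : vecN) (i : nat) : int := x (inord i) 0.

Lemma sum_ord22 (F : 'I_22 -> int) :
  \sum_(i < 22) F i = \sum_(0 <= i < 22) F (inord i).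
Proof. by rewrite big_mkord; apply: eq_bigr => i _; rewrite inord_val. Qed.

Lemma bN_double_sum d x y :
  bN d x y = \sum_(i < 22) \sum_(j < 22) x i 0 * gramN_entry d i j * y j 0.
Proof.
rewrite /bN !mxE; under eq_bigr do rewrite !mxE big_distrl /=.
rewrite exchange_big /=; apply: eq_bigr => i _; apply: eq_bigr => j _.
by rewrite !mxE.
Qed.

Lemma bN_bformN d x y : bN d x y = bformN d (coordN x) (coordN y).
Proof.
rewrite bN_double_sum sum_ord22; under eq_bigr do rewrite sum_ord22.
rewrite unlock /= !inordK //.
rewrite /bformN /bformV /bformU /bformE8 /= addnE /coordN /gramN_entry /e8_entry /e8_adj /=.
ring.
Qed.

Local Ltac unfold_forms :=
  rewrite /bformN /qformN /bformV /qformV /bformU /bformE8 /qformE8 /= ?addnE /=.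

Lemma bformNC d a b : bformN d a b = bformN d b a.
Proof. unfold_forms; ring. Qed.

Lemma bformN_diag d a : bformN d a a = 2 * qformN d a.
Proof. unfold_forms; ring. Qed.

Lemma bformV_ext a a' b b' : (forall k, (k < 20)%N -> a k = a' k) ->
  (forall k, (k < 20)%N -> b k = b' k) -> bformV a b = bformV a' b'.
Proof. by move=> aa' bb'; unfold_forms; rewrite !aa' // !bb'. Qed.

Lemma qformV_ext a a' : (forall k, (k < 20)%N -> a k = a' k) -> qformV a = qformV a'.
Proof. by move=> aa'; unfold_forms; rewrite !aa'. Qed.

Lemma bformN_ext d a a' b b' : (forall k, (k < 22)%N -> a k = a' k) ->
  (forall k, (k < 22)%N -> b k = b' k) -> bformN d a b = bformN d a' b'.
Proof.
move=> aa' bb'; rewrite /bformN; have -> : bformV a b = bformV a' b'.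
  by apply: bformV_ext => k /ltn_trans lt; [apply: aa'|apply: bb']; apply: lt.
by rewrite !aa' // !bb'.
Qed.

Lemma bN_sym d x y : bN d x y = bN d y x.
Proof. by rewrite !bN_bformN bformNC. Qed.

Lemma gramN_sym d : (gramN d)^T = gramN d.
Proof.
have entry i j : gramN d i j = bN d (delta_mx i 0) (delta_mx j 0).
  by rewrite /bN trmx_delta -rowE -colE !mxE.
by apply/matrixP => i j; rewrite mxE !entry bN_sym.
Qed.

Lemma coordN_col (f : nat -> int) k : (k < 22)%N -> coordN (\col_(j < 22) f j) k = f k.
Proof. by move=> k22; rewrite /coordN mxE inordK. Qed.

Lemma coordN_lin a b (u v : vecN) k : coordN (a *: u + b *: v) k = a * coordN u k + b * coordN v k.
Proof. by rewrite /coordN !mxE. Qed.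

Lemma bN_col d (f g : nat -> int) :
  bN d (\col_(k < 22) f k) (\col_(k < 22) g k) = bformN d f g.
Proof. by rewrite bN_bformN; apply: bformN_ext => k k22; rewrite coordN_col. Qed.

Lemma bformN_shift d a b : bformN d a b = bformN 0 a b - (2 * d)%:Z * a 21 * b 21.
Proof. by rewrite /bformN muln0 !mul0r subr0. Qed.

(* An orthogonal basis of N (x) Q: e + f and e - f in both copies of U, eight
   pairwise orthogonal roots of each copy of E_8 (in the basis of simple
   roots), and the two remaining basis vectors. *)
Definition e8_orth_roots : seq (seq int) :=
  [:: [:: 0; 0; 0; 0; 0; 0; 0; 1]; [:: 0; 0; 0; 0; 0; 0; 1; 0];
      [:: 0; 0; 0; 1; 0; 0; 0; 0]; [:: 0; 0; 0; 1; 2; 2; 1; 1];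
      [:: 0; 1; 0; 0; 0; 0; 0; 0]; [:: 0; 1; 2; 2; 2; 2; 1; 1];
      [:: 0; 1; 2; 3; 4; 2; 1; 2]; [:: 2; 3; 4; 5; 6; 4; 2; 3]].

Definition obasis (i k : nat) : int :=
  if (i < 4)%N then
    (if k == (i./2).*2 then 1
     else if k == ((i./2).*2).+1 then (if odd i then -1 else 1) else 0)
  else if (i < 12)%N then
    (if (4 <= k < 12)%N then nth 0 (nth [::] e8_orth_roots (i - 4)) (k - 4) else 0)
  else if (i < 20)%N then
    (if (12 <= k < 20)%N then nth 0 (nth [::] e8_orth_roots (i - 12)) (k - 12) else 0)
  else (i == k)%:R.

Lemma obasis_orth_check : all (fun i => all (fun j =>
  (i == j) || (bformN 0 (obasis i) (obasis j) == 0)) (iota 0 22)) (iota 0 22).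
Proof. by vm_compute. Qed.

Lemma obasis_aniso_check : all (fun i => bformN 0 (obasis i) (obasis i) != 0) (iota 0 21).
Proof. by vm_compute. Qed.

Lemma obasis_last i : (i < 22)%N -> obasis i 21 = (i == 21)%:R.
Proof.
move=> i22; apply/eqP.
have /allP/(_ i) : all (fun i => obasis i 21 == (i == 21)%:R) (iota 0 22) by [].
by rewrite mem_iota; apply.
Qed.

Definition obN (i : 'I_22) : vecN := \col_(k < 22) obasis i k.

Lemma obN_orth d (i j : 'I_22) : i != j -> bN d (obN i) (obN j) = 0.
Proof.
move=> ij; rewrite bN_col bformN_shift !obasis_last //.
have /allP/(_ i) := obasis_orth_check; rewrite mem_iota add0n ltn_ord => /(_ isT).
move=> /allP/(_ j); rewrite mem_iota add0n ltn_ord val_eqE (negbTE ij) => /(_ isT) /eqP ->.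
have last0 : ((i == 21 :> nat) && (j == 21 :> nat)) = false.
  by apply/negbTE; apply: contra ij => /andP[/eqP ei /eqP ej]; apply/eqP/val_inj; rewrite /= ei ej.
by rewrite -mulrA -natrM mulnb last0 mulr0 subr0.
Qed.

Lemma obN_aniso d i : (0 < d)%N -> bN d (obN i) (obN i) != 0.
Proof.
move=> d_gt0; rewrite bN_col bformN_shift obasis_last //.
have [i_lt21|i21] := ltnP i 21.
  have /allP/(_ i) := obasis_aniso_check; rewrite mem_iota add0n i_lt21 => /(_ isT).
  by rewrite (_ : (i == 21 :> nat) = false) ?mulr0 ?subr0 //; apply/negbTE; rewrite neq_ltn i_lt21.
have -> : (i : nat) = 21%N by apply/eqP; rewrite eqn_leq i21 -ltnS ltn_ord.
rewrite (_ : bformN 0 (obasis 21) (obasis 21) = 0) ?sub0r ?oppr_eq0 ?mulr1; last by vm_compute.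
by rewrite -[0 : int]/(Posz 0%N) eqz_nat muln_eq0 -lt0n d_gt0.
Qed.

(* Rows of the inverse of the Gram matrix of E_8.  As U^2 + E_8^2 is
   unimodular, its coordinate functionals are represented by vectors of N. *)
Definition e8_gram_inv : seq (seq int) :=
  [:: [:: -2; -3; -4; -5; -6; -4; -2; -3]; [:: -3; -6; -8; -10; -12; -8; -4; -6];
      [:: -4; -8; -12; -15; -18; -12; -6; -9]; [:: -5; -10; -15; -20; -24; -16; -8; -12];
      [:: -6; -12; -18; -24; -30; -20; -10; -15]; [:: -4; -8; -12; -16; -20; -14; -7; -10];
      [:: -2; -4; -6; -8; -10; -7; -4; -5]; [:: -3; -6; -9; -12; -15; -10; -5; -8]].

Definition dual (k j : nat) : int :=
  if (k < 4)%N then (j == (if odd k then k.-1 else k.+1))%:R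
  else if (k < 12)%N then
    (if (4 <= j < 12)%N then nth 0 (nth [::] e8_gram_inv (j - 4)) (k - 4) else 0)
  else if (12 <= j < 20)%N then nth 0 (nth [::] e8_gram_inv (j - 12)) (k - 12) else 0.

Lemma bformN_dual d a k : (k < 20)%N -> bformN d a (dual k) = a k.
Proof.
move=> k20.
by do 20 (case: k k20 => [|k] k20; first by unfold_forms; rewrite /dual /=; ring).
Qed.

Lemma bN_dual d u k : (k < 20)%N -> bN d u (\col_(j < 22) dual k j) = coordN u k.
Proof.
move=> k20; rewrite bN_bformN -(bformN_dual d (coordN u) k20).
by apply: bformN_ext => // j j22; rewrite coordN_col.
Qed.

Lemma bil_gramR (R : realType) d (x y : vecN) :
  bil (gramR R d) (map_mx intr x) (map_mx intr y) = (bN d x y)%:~R.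
Proof. by rewrite /bil /gramR map_trmx -!map_mxM mxE. Qed.

Lemma isom_N_prod_refl (R : realType) d g : (0 < d)%N -> isom_N d g ->
  exists s, all (fun v => qR d v != 0) s /\ map_mx intr g = prod_refl (gramR R d) s.
Proof.
move=> d_gt0 [_ g_iso]; apply: (@cartan_dieudonne _ _ _ _ _ (fun i => map_mx intr (obN i))).
- by rewrite /gramR map_trmx gramN_sym.
- by rewrite pnatr_eq0.
- by move=> i j ij; rewrite bil_gramR obN_orth.
- by move=> i; rewrite bil_gramR intr_eq0 obN_aniso.
- by rewrite /iso /gramR map_trmx -!map_mxM g_iso.
Qed.

(* For isotropic a and b the [qformN] and [bformN] terms vanish, leaving only
   the unimodular part, i.e. the first twenty coordinates. *)
Lemma minor_sqr (d : nat) (a b : nat -> int) : (a 20 * b 21 - a 21 * b 20) ^+ 2 =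
  b 21 ^+ 2 * (qformV a - qformN d a) + a 21 ^+ 2 * (qformV b - qformN d b)
  - a 21 * b 21 * (bformV a b - bformN d a b).
Proof. rewrite /qformN /bformN; ring. Qed.

Section ScaledForms.
Variables (c : int) (a b : nat -> int).
Hypotheses (c_a : forall k, (k < 20)%N -> (c %| a k)%Z)
  (c_b : forall k, (k < 20)%N -> (c %| b k)%Z).

Lemma dvdz_bformV : (c ^+ 2 %| bformV a b)%Z.
Proof.
rewrite (@bformV_ext a (fun k => c * (a k %/ c)%Z) b (fun k => c * (b k %/ c)%Z));
  last 2 first; try by move=> k k20; rewrite mulrC divzK // ?c_a ?c_b.
have -> : bformV (fun k => c * (a k %/ c)%Z) (fun k => c * (b k %/ c)%Z) =
  c ^+ 2 * bformV (fun k => (a k %/ c)%Z) (fun k => (b k %/ c)%Z) by unfold_forms; ring.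
exact: dvdz_mulr.
Qed.

Lemma dvdz_qformV : (c ^+ 2 %| qformV a)%Z.
Proof.
rewrite (@qformV_ext a (fun k => c * (a k %/ c)%Z)); last first.
  by move=> k k20; rewrite mulrC divzK // c_a.
have -> : qformV (fun k => c * (a k %/ c)%Z) = c ^+ 2 * qformV (fun k => (a k %/ c)%Z).
  by unfold_forms; ring.
exact: dvdz_mulr.
Qed.

End ScaledForms.

Lemma dvdz_minor (c : int) d a b :
  (forall k, (k < 20)%N -> (c %| a k)%Z) -> (forall k, (k < 20)%N -> (c %| b k)%Z) ->
  bformN d a a = 0 -> bformN d b b = 0 -> bformN d a b = 0 ->
  (c %| a 20%N * b 21%N - a 21%N * b 20%N)%Z.
Proof.
move=> c_a c_b aa bb ab.
have q0 x : bformN d x x = 0 -> qformN d x = 0.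
  by rewrite bformN_diag => /eqP; rewrite mulf_eq0 /= => /eqP.
rewrite -(@dvdz_pexp2r _ _ 2) // (minor_sqr d) q0 // q0 // ab !subr0.
by rewrite rpredB ?rpredD // dvdz_mull // (dvdz_qformV, dvdz_bformV).
Qed.

Lemma singular_mod_prime_kernel (p : nat) A B C E : prime p ->
  (p %| A * E - B * C)%Z -> exists x y : int,
    [/\ ~~ ((p %| x)%Z && (p %| y)%Z), (p %| x * A + y * C)%Z & (p %| x * B + y * E)%Z].
Proof.
move=> p_pr det_p.
have p_n1 : ~~ (p %| 1)%Z by rewrite dvdz1 /=; case: eqP p_pr => // ->.
case EB: ((p %| E)%Z && (p %| B)%Z); last first.
  exists E, (- B); split; first by rewrite rpredN EB.
    by have -> : E * A + - B * C = A * E - B * C by ring.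
  by have -> : E * B + - B * E = 0 by ring.
case CA: ((p %| C)%Z && (p %| A)%Z); last first.
  exists C, (- A); split; first by rewrite rpredN CA.
    by have -> : C * A + - A * C = 0 by ring.
  have -> : C * B + - A * E = - (A * E - B * C) by ring.
  by rewrite rpredN.
exists 1, 0; split; first by rewrite (negbTE p_n1).
  by case/andP: CA => _ p_A; rewrite mul1r mul0r addr0.
by case/andP: EB => _ p_B; rewrite mul1r mul0r addr0.
Qed.

Lemma dvdz_mulmxl (c : int) m n p (A : 'M[int]_(m, n)) (B : 'M[int]_(n, p)) :
  (forall i j, (c %| A i j)%Z) -> forall i j, (c %| (A *m B) i j)%Z.
Proof. by move=> c_A i j; rewrite mxE; apply: rpred_sum => k _; apply: dvdz_mulr. Qed.

Lemma dvdz_mulmxr (c : int) m n p (A : 'M[int]_(m, n)) (B : 'M[int]_(n, p)) :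
  (forall i j, (c %| B i j)%Z) -> forall i j, (c %| (A *m B) i j)%Z.
Proof. by move=> c_B i j; rewrite mxE; apply: rpred_sum => k _; apply: dvdz_mull. Qed.

(* c is the first Smith invariant of M. *)
Lemma int_mx_content_attained m n (M : 'M[int]_(m.+1, n.+1)) :
  exists2 c : int, (forall i j, (c %| M i j)%Z) &
    exists (a : 'cV_m.+1) (w : 'cV_n.+1), (a^T *m M *m w) 0 0 = c.
Proof.
have [L L_unit [R R_unit [dd dd_sorted defM]]] := int_Smith_normal_form M.
set D := \matrix_(i, j) _ in defM; exists dd`_0.
  have dd0_dvd i : (dd`_0 %| dd`_i)%Z.
    have [i_lt|i_ge] := ltnP i (size dd); last by rewrite nth_default.
    case: dd {D defM} dd_sorted i_lt => [|x s] // s_sorted i_lt.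
    exact: (sorted_leq_nth dvdz_trans dvdzz).
  have D_dvd i j : (dd`_0 %| D i j)%Z by rewrite mxE; apply: rpredMn.
  by rewrite defM; apply: dvdz_mulmxl; apply: dvdz_mulmxr.
pose e1 : 'cV[int]_m.+1 := delta_mx 0 0; pose e2 : 'cV[int]_n.+1 := delta_mx 0 0.
exists ((invmx L)^T *m e1), (invmx R *m e2).
have -> : ((invmx L)^T *m e1)^T *m M *m (invmx R *m e2) = e1^T *m (invmx L *m M *m invmx R) *m e2.
  by rewrite trmx_mul trmxK !mulmxA.
have -> : invmx L *m M *m invmx R = D.
  by rewrite defM -!mulmxA mulKmx // mulmxV // mulmx1.
by rewrite /e1 /e2 trmx_delta -rowE -colE !mxE /= mulr1n.
Qed.

Section PrimitivePlane.
Variables (d : nat) (L : vecN -> Prop) (u1 u2 : vecN).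
Hypotheses (u_indep : forall a b : int, a *: u1 + b *: u2 = 0 -> a = 0 /\ b = 0)
  (L_span : forall x, L x <-> span2 u1 u2 x)
  (L_prim : forall (k : int) (x : vecN), k != 0 -> L (k *: x) -> L x)
  (L_iso : forall x y, L x -> L y -> bN d x y = 0).

Lemma primitive_dvd_coef (c x y : int) : c != 0 ->
  (forall i, (c %| (x *: u1 + y *: u2) i ord0)%Z) -> (c %| x)%Z && (c %| y)%Z.
Proof.
move=> c_neq0 c_z; set z := x *: u1 + y *: u2 in c_z.
pose z' : vecN := \col_i (z i ord0 %/ c)%Z.
have z_cz' : z = c *: z'.
  by apply/colP => i; rewrite [RHS]mxE [X in _ * X]mxE mulrC divzK ?c_z.
have [a [b z'_ab]] : span2 u1 u2 z'.
  by apply/L_span/(L_prim c_neq0); rewrite -z_cz'; apply/L_span; exists x, y.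
have /u_indep[/eqP] : (x - c * a) *: u1 + (y - c * b) *: u2 = 0.
  apply/colP => i; move/colP/(_ i): z_cz'; rewrite z'_ab !mxE => zi.
  transitivity (x * u1 i 0 + y * u2 i 0 - c * (a * u1 i 0 + b * u2 i 0)); first ring.
  by rewrite zi subrr.
by rewrite subr_eq0 => /eqP-> /eqP; rewrite subr_eq0 => /eqP->; rewrite !dvdz_mulr.
Qed.

Lemma no_common_prime_divisor (p : nat) : prime p ->
  ~ (forall z, (p %| bN d u1 z)%Z /\ (p %| bN d u2 z)%Z).
Proof.
move=> p_pr p_u.
have [p_u1 p_u2] : (forall k, (k < 20)%N -> (p %| coordN u1 k)%Z) /\
                   (forall k, (k < 20)%N -> (p %| coordN u2 k)%Z).
  by split=> k k20; rewrite -(bN_dual d) //; case: (p_u (\col_j dual k j)).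
have L_u1 : L u1 by apply/L_span; exists 1, 0; rewrite scale1r scale0r addr0.
have L_u2 : L u2 by apply/L_span; exists 0, 1; rewrite scale1r scale0r add0r.
have iso_coord x y : L x -> L y -> bformN d (coordN x) (coordN y) = 0.
  by move=> Lx Ly; rewrite -bN_bformN L_iso.
have := dvdz_minor p_u1 p_u2 (iso_coord _ _ L_u1 L_u1) (iso_coord _ _ L_u2 L_u2)
  (iso_coord _ _ L_u1 L_u2).
case/(singular_mod_prime_kernel p_pr) => x [y [p_xy p_z20 p_z21]].
apply: (negP p_xy); apply: primitive_dvd_coef; first by rewrite -lt0n prime_gt0.
move=> i; rewrite -(inord_val i) -/(coordN _ i) coordN_lin.
have := ltn_ord i; rewrite ltnS leq_eqVlt => /orP[/eqP-> //|].
rewrite ltnS leq_eqVlt => /orP[/eqP-> //|i20].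
by rewrite rpredD // dvdz_mull // ?p_u1 ?p_u2.
Qed.

End PrimitivePlane.

Lemma bN_pair_content d (u1 u2 : vecN) : exists2 c : int,
    (forall z, (c %| bN d u1 z)%Z /\ (c %| bN d u2 z)%Z) &
    exists a b w, bN d (a *: u1 + b *: u2) w = c.
Proof.
pose U : 'M[int]_(22, 2) := \matrix_(i, j) (if val j == 0%N then u1 i 0 else u2 i 0).
have [U_u1 U_u2] : col 0 U = u1 /\ col 1 U = u2 by split; apply/colP => i; rewrite !mxE.
have U_mul (a : 'cV[int]_2) : U *m a = a 0 0 *: u1 + a 1 0 *: u2.
  apply/colP => i; rewrite !mxE big_ord_recr big_ord1 /= !mxE /=.
  rewrite (_ : widen_ord _ _ = 0); last exact: val_inj.
  rewrite (_ : ord_max = 1); last exact: val_inj.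
  by rewrite mulrC (mulrC (u2 i 0)).
have [c c_dvd [a [w c_aw]]] := int_mx_content_attained (U^T *m gramN d).
exists c.
  have bN_entry i z : bN d (col i U) z = (U^T *m gramN d *m z) i 0.
    by rewrite gram_entry col_id.
  by move=> z; rewrite -U_u1 -U_u2 !bN_entry; split; apply: dvdz_mulmxl.
by exists (a 0 0), (a 1 0), w; rewrite -U_mul -c_aw /bN trmx_mul !mulmxA.
Qed.

Lemma prim_iso_rank2_unimodular d L : prim_iso_rank2 d L ->
  exists u w, L u /\ bN d u w = 1.
Proof.
case=> [[u1 [u2 [u_indep L_span]]] L_prim L_iso].
have [c c_dvd [a [b [w c_val]]]] := bN_pair_content d u1 u2.
have L_ab : L (a *: u1 + b *: u2) by apply/L_span; exists a, b.
have [c_unit|c_nunit] := eqVneq `|c|%N 1.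
  exists (a *: u1 + b *: u2), (c *: w); split=> //.
  have c2 : c * c = 1 by move: c_unit; case: (c) => [[|[|k]]|[|k]].
  by rewrite /bN -scalemxAr mxE -/(bN d _ _) c_val.
have [p p_pr p_c] : exists2 p, prime p & (p %| c)%Z.
  have [->|c_neq0] := eqVneq c 0; first by exists 2%N.
  exists (pdiv `|c|); last exact: pdiv_dvd.
  by apply: pdiv_prime; rewrite ltn_neqAle eq_sym c_nunit absz_gt0 c_neq0.
case: (no_common_prime_divisor u_indep L_span L_prim L_iso p_pr) => z.
by case: (c_dvd z) => c_u1 c_u2; split; apply: dvdz_trans p_c _.
Qed.

Lemma isotropic_partner d u w : bN d u u = 0 -> bN d u w = 1 ->
  exists2 w', bN d u w' = 1 & bN d w' w' = 0.
Proof.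
move=> uu uw; have bNE : bN d = bil (gramN d) by [].
have ww : bN d w w = 2 * qformN d (coordN w) by rewrite bN_bformN bformN_diag.
exists (w - qformN d (coordN w) *: u); rewrite bNE in uu uw ww *.
  by rewrite bilBr bilZr uw uu mulr0 subr0.
rewrite bilBl !bilBr !bilZl !bilZr uu ww (bilC (gramN_sym d) w u) uw; ring.
Qed.

Definition reflpair d (x y : vecN) : 'M[int]_22 :=
  pseudorefl (gramN d) 1 x *m pseudorefl (gramN d) (-1) y.

Lemma isom_reflpair d x y : bN d x x = 2 -> bN d y y = -2 -> isom_N d (reflpair d x y).
Proof.
move=> xx yy; have G_sym := gramN_sym d.
have ex : 1 * bil (gramN d) x x = 2 by rewrite mul1r.
have ey : -1 * bil (gramN d) y y = 2 by rewrite mulN1r [bil _ _ _]yy opprK.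
split; last by apply: iso_mul; apply: pseudorefl_iso.
rewrite unitmx_mul; case: (mulmx1_unit (pseudorefl_invol ex)) => -> _.
by case: (mulmx1_unit (pseudorefl_invol ey)).
Qed.

Lemma map_reflpair (R : realType) d x y : bN d x x = 2 -> bN d y y = -2 ->
  map_mx intr (reflpair d x y) =
  prod_refl (gramR R d) [:: map_mx intr x; map_mx intr y].
Proof.
move=> xx yy; rewrite /prod_refl big_cons big_seq1 /refl !bil_gramR xx yy.
rewrite /reflpair /pseudorefl /dyad map_mxM !map_mxB map_mx1 !map_mxZ !map_mxM !map_trmx.
have -> : (2 / (-2)%:~R : R) = -1 by rewrite rmorphN /= invrN mulrN divff // pnatr_eq0.
have -> : (2 / 2%:~R : R) = 1 by rewrite (_ : (2%:~R : R) = 2) // divff // pnatr_eq0.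
by rewrite rmorph1 rmorphN1.
Qed.

Lemma prim_iso_rank2_stab d L : prim_iso_rank2 d L -> exists x y,
  [/\ bN d x x = 2, bN d y y = -2 & forall z, L z ->
      L (reflpair d x y *m z) /\ reflpair d x y *m (reflpair d x y *m z) = z].
Proof.
move=> L_prim_iso; have [u [w [L_u uw]]] := prim_iso_rank2_unimodular L_prim_iso.
case: L_prim_iso => [[u1 [u2 [_ L_span]]] _ L_iso].
have uu := L_iso _ _ L_u L_u.
have [w' uw' w'w'] := isotropic_partner uu uw.
have w'u : bN d w' u = 1 by rewrite bN_sym.
have bNE : bN d = bil (gramN d) by [].
rewrite bNE in uu uw' w'w' w'u.
exists (u + w'), (u - w'); split.
- by rewrite bNE bilDl !bilDr uu uw' w'u w'w'.
- by rewrite bNE bilBl !bilBr uu uw' w'u w'w'.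
have L_sub z k : L z -> L (z - k *: u).
  case/L_span=> a [b z_ab]; have [a' [b' u_ab]] := (L_span u).1 L_u.
  apply/L_span; exists (a - k * a'), (b - k * b').
  by rewrite z_ab u_ab; apply/colP => i; rewrite !mxE; ring.
have h_z z : L z -> reflpair d (u + w') (u - w') *m z = z - (2 * bN d w' z) *: u.
  by move=> L_z; rewrite -mulmxA (pseudorefl_hyperbolic (gramN_sym d)) //; exact: L_iso.
move=> z L_z; have L_hz := L_sub z (2 * bN d w' z) L_z.
rewrite !h_z //; split=> //.
have -> : bN d w' (z - (2 * bN d w' z) *: u) = - bN d w' z.
  by rewrite bNE bilBr bilZr w'u; ring.
by apply/colP => i; rewrite !mxE; ring.
Qed.

Lemma maps_to_stab g h L L' : maps_to g L L' ->
  (forall z, L' z -> L' (h *m z) /\ h *m (h *m z) = z) -> maps_to (h *m g) L L'.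
Proof.
move=> g_L h_L' y; split.
  move=> L'_y; have [L'_hy hhy] := h_L' y L'_y.
  have [x [L_x hy_gx]] := (g_L _).1 L'_hy.
  by exists x; split=> //; rewrite -mulmxA -hy_gx hhy.
case=> x [L_x ->]; rewrite -mulmxA.
by apply: (h_L' _ _).1; apply/g_L; exists x.
Qed.

Lemma isom_N_mul d g h : isom_N d g -> isom_N d h -> isom_N d (g *m h).
Proof.
by case=> g_unit g_iso [h_unit h_iso]; split; [rewrite unitmx_mul g_unit | exact: iso_mul].
Qed.

Lemma qR_map (R : realType) d x : qR d (map_mx intr x : 'cV[R]_22) = (bN d x x)%:~R.
Proof. exact: bil_gramR. Qed.

Lemma spinor_norm_one_reflpair (R : realType) d x y s (g : 'M[int]_22) :
  bN d x x = 2 -> bN d y y = -2 -> all (fun v => qR d v != 0) s ->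
  map_mx intr g = prod_refl (gramR R d) s -> \prod_(v <- s) (- qR d v / 2) < 0 ->
  spinor_norm_one d (map_mx intr (reflpair d x y *m g) : 'M[R]_22).
Proof.
move=> xx yy s_aniso g_s sn_neg.
exists [:: map_mx intr x, map_mx intr y & s]; split.
- by rewrite /= !qR_map xx yy s_aniso !intr_eq0.
- by rewrite map_mxM (map_reflpair R xx yy) g_s /prod_refl !big_cons big_nil mulr1 mulrA.
rewrite !big_cons !qR_map xx yy.
have -> : (- (2%:~R : R) / 2) = -1 by rewrite mulNr divff // pnatr_eq0.
have -> : (- ((-2)%:~R : R) / 2) = 1 by rewrite rmorphN opprK /= divff // pnatr_eq0.
by rewrite mul1r mulN1r oppr_gt0.
Qed.

Theorem mainTheorem19 (R : realType) (d : nat) :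
  (0 < d)%N -> squarefree d ->
  forall L L' : vecN -> Prop,
    prim_iso_rank2 d L -> prim_iso_rank2 d L' ->
    ((exists g, isom_N d g /\ maps_to g L L') <->
     (exists g, isom_plus_N R d g /\ maps_to g L L')).
Proof.
move=> d_gt0 _ L L' _ L'_pi; split; last by case=> g [[g_isom _] g_L]; exists g.
case=> g [g_isom g_L].
have [s [s_aniso g_s]] := isom_N_prod_refl R d_gt0 g_isom.
have sn_neq0 : \prod_(v <- s) (- qR d v / 2) != 0.
  rewrite prodf_seq_neq0; apply/allP => v /(allP s_aniso) v_aniso.
  by rewrite mulf_neq0 ?oppr_eq0 ?invr_eq0 ?pnatr_eq0.
have [sn_neg|sn_ge0] := ltP (\prod_(v <- s) (- qR d v / 2)) 0.
  have [x [y [xx yy h_L']]] := prim_iso_rank2_stab L'_pi.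
  exists (reflpair d x y *m g); split; last exact: maps_to_stab.
  split; first exact: isom_N_mul (isom_reflpair xx yy) g_isom.
  exact: (spinor_norm_one_reflpair xx yy s_aniso g_s sn_neg).
exists g; split=> //; split=> //; exists s; split=> //.
by rewrite lt_neqAle eq_sym sn_neq0.
Qed.
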